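(* Let $\Theta\subset\mathbb{R}^n$ be a nearly convex set and $F:\mathbb{R}^n\rightrightarrows\mathbb{R}^p$, $G:\mathbb{R}^n\rightrightarrows\mathbb{R}^q$ nearly convex set-valued mappings such that $\operatorname{ri}(\operatorname{dom} F)\cap\operatorname{ri}(\operatorname{dom} G)\cap\operatorname{ri}\Theta\neq\emptyset$. Then the set-valued mapping $\Phi:\mathbb{R}^n\times\mathbb{R}^q\rightrightarrows\mathbb{R}^p$ defined by $\Phi(x,y)=F(x)$ if $x\in\Theta$ and $y\in G(x)$, and $\Phi(x,y)=\emptyset$ otherwise, is nearly convex.
   Context: A set $\Omega\subset\mathbb{R}^k$ is nearly convex if there is a convex set $C$ with $C\subset\Omega\subset\overline{C}$. For an arbitrary set $\Omega$, $\operatorname{ri}\Omega=\{a\in\Omega:\exists\delta>0,\ B(a;\delta)\cap\operatorname{aff}\Omega\subset\Omega\}$. For a set-valued mapping $F$: $\operatorname{dom} F=\{x:F(x)\neq\emptyset\}$, $\operatorname{gph} F=\{(x,y):y\in F(x)\}$; $F$ is nearly convex if $\operatorname{gph} F$ is nearly convex. *)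

From HB Require Import structures.
From mathcomp Require Import all_boot all_order all_algebra.
From mathcomp Require Import all_classical all_reals all_analysis.
Set Implicit Arguments. Unset Strict Implicit. Unset Printing Implicit Defensive.
Import Order.TTheory GRing.Theory Num.Theory.
Import numFieldNormedType.Exports.
Local Open Scope classical_set_scope.
Local Open Scope ring_scope.

Section Defs.
Context {R : realType}.

Definition affine_set {k : nat} (A : set 'rV[R]_k) : Prop :=
  forall x y (t : R), A x -> A y -> A (t *: x + (1 - t) *: y).

Definition aff {k : nat} (O : set 'rV[R]_k) : set 'rV[R]_k :=
  \bigcap_(A in [set A | affine_set A /\ O `<=` A]) A.

Definition eball {k : nat} (a : 'rV[R]_k) (d : R) : set 'rV[R]_k :=
  [set x | \sum_(i < k) (x ord0 i - a ord0 i) ^+ 2 < d ^+ 2].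

Definition ri {k : nat} (O : set 'rV[R]_k) : set 'rV[R]_k :=
  [set a | O a /\ exists2 d : R, 0 < d & eball a d `&` aff O `<=` O].

Definition nearly_convex {k : nat} (O : set 'rV[R]_k) : Prop :=
  exists C : set 'rV[R]_k,
    convex_set (C : set (convex_lmodType 'rV[R]_k)) /\ C `<=` O /\ O `<=` closure C.

Definition sv_dom {n m : nat} (F : 'rV[R]_n -> set 'rV[R]_m) : set 'rV[R]_n :=
  [set x | F x !=set0].

Definition gph {n m : nat} (F : 'rV[R]_n -> set 'rV[R]_m) : set 'rV[R]_(n + m) :=
  [set z | exists x y, z = row_mx x y /\ F x y].

Definition nearly_convex_map {n m : nat} (F : 'rV[R]_n -> set 'rV[R]_m) : Prop :=
  nearly_convex (gph F).

Definition Phi_map {n p q : nat} (Th : set 'rV[R]_n)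
    (F : 'rV[R]_n -> set 'rV[R]_p) (G : 'rV[R]_n -> set 'rV[R]_q) :
    'rV[R]_(n + q) -> set 'rV[R]_p :=
  fun z => [set w | Th (lsubmx z) /\ G (lsubmx z) (rsubmx z) /\ F (lsubmx z) w].

End Defs.

(* Take convex C1, C2, C3 with C1 <= Th <= cl C1,
   C2 <= gph F <= cl C2 and C3 <= gph G <= cl C3.  The convex set
   {(x, y, w) | x \in C1, (x, y) \in C3, (x, w) \in C2} lies in gph Phi; it
   is dense in gph Phi because a common relative interior point x0 is a core
   point of C1 and the first component of core points z3 of C3 and z2 of C2,
   and by the line segment principle the half-open segment from
   (x0, y3, w2) to any point of gph Phi stays inside this convex set.

   A frame (a matrix of maximal rank whose
   rows point from a base point into the set) describes the affine hull
   concretely; it shows that affine hulls are closed and that nonempty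
   convex sets have core points. *)

Set Warnings "-notation-overridden,-ambiguous-paths,-notation-incompatible-prefix".
From HB Require Import structures.
From mathcomp Require Import all_boot all_order all_algebra.
From mathcomp Require Import all_classical all_reals all_analysis.
From mathcomp Require Import ring lra.
Import Order.TTheory GRing.Theory Num.Theory.
Import numFieldNormedType.Exports.
Local Open Scope classical_set_scope.
Local Open Scope ring_scope.

Section NearlyConvex.
Context {R : realType}.
Local Notation V k := 'rV[R]_k.

(* The norm of a row vector is the maximum of the absolute values of its
   coordinates. *)
Lemma norm_coord_le {k} (v : V k) i : `|v ord0 i| <= `|v|.
Proof.
rewrite [leRHS]/Num.Def.normr /= mx_normrE.
exact: le_trans _ (le_bigmax _ _ (ord0, i)).
Qed.

Lemma norm_le_coord {k} (v : V k) c :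
  0 <= c -> (forall i, `|v ord0 i| <= c) -> `|v| <= c.
Proof.
move=> c_ge0 vc; rewrite [leLHS]/Num.Def.normr /= mx_normrE.
by apply: bigmax_le => // -[i j] _ /=; rewrite (ord1 i).
Qed.

Lemma eball_of_norm {k} (a x : V k) d :
  0 < d -> `|x - a| < d / k.+1%:R -> eball a d x.
Proof.
move=> d_gt0; rewrite /eball /= ltr_pdivlMr // -natr1.
have := norm_coord_le (x - a); move: (normr_ge0 (x - a)).
move: `|x - a| => r r_ge0 coord_le rk.
apply: (@le_lt_trans _ _ (\sum_(i < k) r ^+ 2)).
  apply: ler_sum => i _; have := coord_le i; rewrite !mxE ler_norml.
  by move=> /andP[? ?]; nra.
rewrite sumr_const card_ord -mulr_natr.
have k_ge0 : 0 <= k%:R :> R by [].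
have rk2 : (r * (k%:R + 1)) ^+ 2 < d ^+ 2 by rewrite ltrXn2r // mulr_ge0 ?addr_ge0.
by apply: le_lt_trans rk2; nra.
Qed.

Lemma mulmx_bound {k l} (K : 'M[R]_(k, l)) :
  exists2 c, 0 <= c & forall v : V k, `|v *m K| <= c * `|v|.
Proof.
have c_ge0 : 0 <= \sum_i \sum_j `|K i j| by do 2!apply: sumr_ge0 => ? _.
exists (\sum_i \sum_j `|K i j|) => // v.
apply: norm_le_coord => [|j]; first by rewrite mulr_ge0.
rewrite mxE; apply: le_trans (ler_norm_sum _ _ _) _.
rewrite mulrC mulr_sumr; apply: ler_sum => i _.
rewrite normrM ler_pM ?norm_coord_le //.
by rewrite (bigD1 j) //= lerDl sumr_ge0.
Qed.

Lemma closure_normP {k} {C : set (V k)} {a : V k} :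
  closure C a <-> forall e, 0 < e -> exists2 c, C c & `|a - c| < e.
Proof.
split=> [aC e e_gt0 | aC B /nbhs_ballP[e e_gt0 eB]].
  have [c [Cc ac]] := aC _ (nbhsx_ballx a _ e_gt0).
  by exists c => //; move: ac; rewrite -ball_normE.
have [c Cc ac] := aC e e_gt0.
by exists c; split => //; apply: eB; rewrite -ball_normE.
Qed.

Lemma segments_closure {k} {C S : set (V k)} (z0 : V k) :
  (forall w t, S w -> 0 < t -> t <= 1 -> C (t *: z0 + (1 - t) *: w)) ->
  S `<=` closure C.
Proof.
move=> segC w Sw; apply/closure_normP => e e_gt0.
have eN : 0 < e + `|w - z0| by rewrite ltr_pwDl.
have t_gt0 : 0 < e / (e + `|w - z0|) by rewrite divr_gt0.
exists (e / (e + `|w - z0|) *: z0 + (1 - e / (e + `|w - z0|)) *: w).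
  by apply: segC; rewrite // ler_pdivrMr // mul1r lerDl.
have -> : w - (e / (e + `|w - z0|) *: z0 + (1 - e / (e + `|w - z0|)) *: w) =
    e / (e + `|w - z0|) *: (w - z0) by apply/rowP => j; rewrite !mxE; ring.
rewrite normrZ gtr0_norm // mulrAC ltr_pdivrMr //.
by rewrite ltr_pM2l // ltr_pwDl.
Qed.

Definition is_convex {k} (C : set (V k)) : Prop :=
  forall x y t, 0 <= t -> t <= 1 -> C x -> C y -> C (t *: x + (1 - t) *: y).

Lemma is_convexP {k} (C : set (V k)) :
  convex_set (C : set (convex_lmodType (V k))) <-> is_convex C.
Proof.
split=> [cC x y t t_ge0 t_le1 Cx Cy | cC x y l xC yC].
  exact: set_mem (cC x y (Itv01 t_ge0 t_le1) (mem_set Cx) (mem_set Cy)).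
by apply/mem_set/cC; rewrite ?ge0 ?le1 //; apply: set_mem.
Qed.

Lemma aff_affine {k} (O : set (V k)) : affine_set (aff O).
Proof.
move=> x y t Ox Oy S SP; have [affS _] := SP.
by apply: affS; [apply: Ox | apply: Oy].
Qed.

Lemma sub_aff {k} {O : set (V k)} : O `<=` aff O.
Proof. by move=> x Ox S [_]; apply. Qed.

Lemma aff_min {k} {O S : set (V k)} : affine_set S -> O `<=` S -> aff O `<=` S.
Proof. by move=> affS OS x; apply. Qed.

Lemma affS {k} {C O : set (V k)} : C `<=` O -> aff C `<=` aff O.
Proof. by move=> CO; apply: aff_min (aff_affine O) _ => x /CO /sub_aff. Qed.

Lemma affine_add {k} {S : set (V k)} {c x y : V k} :
  affine_set S -> S c -> S x -> S y -> S (x + y - c).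
Proof.
move=> affS Sc Sx Sy; have := affS _ _ 2 (affS _ _ 2^-1 Sx Sy) Sc.
by congr S; apply/rowP => j; rewrite !mxE; field.
Qed.

Lemma affine_star_sum {I : Type} {k} {S : set (V k)} {c : V k} {s : seq I}
    {w : I -> R} {f : I -> V k} :
  affine_set S -> S c -> (forall i, S (c + f i)) ->
  S (c + \sum_(i <- s) w i *: f i).
Proof.
move=> affS Sc Sf; elim: s => [|i s IHs]; first by rewrite big_nil addr0.
have Swi : S (c + w i *: f i).
  by have := affS _ _ (w i) (Sf i) Sc; congr S; apply/rowP => j; rewrite !mxE; ring.
have := affine_add affS Sc Swi IHs.
by rewrite big_cons; congr S; apply/rowP => j; rewrite !mxE; ring.
Qed.

Lemma convex_star_sum {I : eqType} {k} {C : set (V k)} {c : V k} {s : seq I}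
    {w : I -> R} {f : I -> V k} :
  is_convex C -> C c -> (forall i, C (c + f i)) -> (forall i, 0 <= w i) ->
  \sum_(i <- s) w i <= 1 -> C (c + \sum_(i <- s) w i *: f i).
Proof.
move=> cC Cc Cf; elim: s w => [|i s IHs] w w_ge0; first by rewrite !big_nil addr0.
rewrite !big_cons => sum_le1.
have rest_ge0 : 0 <= \sum_(j <- s) w j by apply: sumr_ge0.
have [wi1 | wi_neq1] := eqVneq (w i) 1.
  have /eqP : \sum_(j <- s) w j = 0 by lra.
  rewrite psumr_eq0 // => /allP rest0.
  by rewrite wi1 scale1r big_seq big1 ?addr0 // => j /rest0 /eqP ->; rewrite scale0r.
have wi_lt1 : w i < 1 by rewrite lt_neqAle wi_neq1 (le_trans _ sum_le1) // lerDl.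
have wi'_gt0 : 0 < 1 - w i by rewrite subr_gt0.
have Crest : C (c + (1 - w i)^-1 *: \sum_(j <- s) w j *: f j).
  rewrite scaler_sumr; under eq_bigr do rewrite scalerA.
  apply: IHs => [j|]; first by rewrite mulr_ge0 // invr_ge0 ltW.
  by rewrite -mulr_sumr ler_pdivrMl // mulr1 lerBrDl.
have := cC _ _ (w i) (w_ge0 i) (ltW wi_lt1) (Cf i) Crest.
by congr C; apply/rowP => j; rewrite !mxE; field; rewrite gt_eqF.
Qed.

(* [a] is a core point of [C]: some ball around [a] meets the affine hull of
   [C] inside [C].  For convex sets these are the relative interior points. *)
Definition core {k} (C : set (V k)) (a : V k) : Prop :=
  C a /\ exists2 d, 0 < d & forall u, `|u - a| < d -> aff C u -> C u.

(* A frame of [C] at [c0 \in C] is a matrix [M] whose rows [m_i] satisfy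
   [c0 + m_i \in C] and whose row space contains [c - c0] for all [c \in C].
   The affine hull of [C] is then [c0] plus the row space of [M]; this
   concrete description shows that the hull is closed and that the
   barycenter of the frame is a core point of a convex [C]. *)
Section Frame.
Context {k r : nat} {C : set (V k)} {c0 : V k} {M : 'M[R]_(r, k)}.
Hypothesis Cc0 : C c0.
Hypothesis frame_in : forall i, C (c0 + row i M).
Hypothesis frame_spans : forall c, C c -> (c - c0 <= M)%MS.

Lemma aff_frame : aff C = [set u | (u - c0 <= M)%MS].
Proof.
apply/seteqP; split.
  apply: aff_min => [x y t /= xM yM | c /frame_spans //].
  have -> : t *: x + (1 - t) *: y - c0 = t *: (x - c0) + (1 - t) *: (y - c0).
    by apply/rowP => j; rewrite !mxE; ring.
  by rewrite addmx_sub ?scalemx_sub.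
move=> u /= /submxP[D uD]; have -> : u = c0 + D *m M by rewrite -uD addrC subrK.
rewrite mulmx_sum_row; apply: affine_star_sum (aff_affine C) (sub_aff _ Cc0) _.
by move=> i; apply: sub_aff.
Qed.

Lemma aff_frame_closed : closure (aff C) `<=` aff C.
Proof.
rewrite aff_frame => a /closure_normP aM /=; rewrite submxE -normr_eq0.
have [c c_ge0 cP] := mulmx_bound (cokermx M).
rewrite eq_le normr_ge0 andbT; apply/ler_addgt0Pr => e e_gt0; rewrite add0r.
have e'_gt0 : 0 < e / (c + 1) by rewrite divr_gt0 // ltr_wpDl.
have [u uM au] := aM _ e'_gt0.
have -> : (a - c0) *m cokermx M = (a - u) *m cokermx M.
  move: uM; rewrite /= submxE => /eqP uM.
  by rewrite -[a - c0](subrK (u - c0)) mulmxDl uM addr0 opprB addrA subrK.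
apply: le_trans (cP _) _; apply: le_trans (ler_wpM2l c_ge0 (ltW au)) _.
by rewrite mulrA ler_pdivrMr ?ltr_wpDl //; nra.
Qed.

Hypothesis cC : is_convex C.

Lemma frame_perturb (lam : 'rV[R]_r) :
  (forall i, `|lam ord0 i| <= (r.+1%:R ^+ 2)^-1) ->
  C (c0 + (const_mx r.+1%:R^-1 + lam) *m M).
Proof.
set x : R := r.+1%:R^-1 => lam_le.
have rx : r%:R * x = 1 - x by rewrite /x -natr1; field; rewrite natr1 pnatr_eq0.
have x_gt0 : 0 < x by rewrite invr_gt0.
have x_le1 : x <= 1 by rewrite invf_le1 // ler1n.
have lam_ge : forall i, - x ^+ 2 <= lam ord0 i.
  by move=> i; have := lam_le i; rewrite exprVn ler_norml => /andP[].
rewrite mulmx_sum_row; apply: convex_star_sum => // [i|].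
  by rewrite !mxE; have := lam_ge i; nra.
apply: le_trans (_ : \sum_(i < r) (x + x ^+ 2) <= 1).
  apply: ler_sum => i _; rewrite !mxE lerD2l.
  by rewrite exprVn; apply: le_trans (ler_norm _) (lam_le i).
by rewrite sumr_const card_ord -mulr_natl mulrDr rx expr2 mulrA rx; nra.
Qed.

Lemma frame_core : core C (c0 + const_mx r.+1%:R^-1 *m M).
Proof.
set b := c0 + _; have [c c_ge0 cP] := mulmx_bound (pinvmx M).
pose d := ((r.+1%:R ^+ 2) * (c + 1))^-1.
have d_gt0 : 0 < d by rewrite invr_gt0 mulr_gt0 ?exprn_gt0 ?ltr_wpDl.
split.
  by have := frame_perturb 0; rewrite addr0; apply=> i; rewrite mxE normr0 invr_ge0.
exists d => // u ub; rewrite aff_frame /= => uM.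
have ubM : (u - b <= M)%MS.
  by rewrite /b opprD addrA addmx_sub // eqmx_opp submxMl.
have -> : u = c0 + (const_mx r.+1%:R^-1 + (u - b) *m pinvmx M) *m M.
  by rewrite mulmxDl mulmxKpV // addrA -/b addrC subrK.
apply: frame_perturb => i; apply: le_trans (norm_coord_le _ _) _.
apply: le_trans (cP _) _; apply: le_trans (ler_wpM2l c_ge0 (ltW ub)) _.
rewrite /d invfM mulrCA ler_piMr ?invr_ge0 //.
by rewrite ler_pdivrMr ?ltr_wpDl // mul1r lerDl.
Qed.

End Frame.

(* Every point [c0] of a set gives a frame: rows [c - c0] of maximal rank. *)
Lemma frame_exists {k} {C : set (V k)} {c0 : V k} : C c0 ->
  exists r (M : 'M[R]_(r, k)),
    (forall i, C (c0 + row i M)) /\ (forall c, C c -> (c - c0 <= M)%MS).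
Proof.
move=> Cc0.
pose has_frame_rank (m : nat) := `[< exists r (M : 'M[R]_(r, k)),
  (forall i, C (c0 + row i M)) /\ \rank M = m >].
have frame_rank_ex : exists m, has_frame_rank m.
  by exists 0%N; apply/asboolP; exists 0%N, 0; split; [case | exact: mxrank0].
have rank_le : forall m, has_frame_rank m -> (m <= k)%N.
  by move=> m /asboolP[r [M [_ <-]]]; exact: rank_leq_col.
have [m /asboolP[r [M [CM rM]]] rank_max] := ex_maxnP frame_rank_ex rank_le.
exists r, M; split => // c Cc.
pose M' := col_mx M (c - c0).
have sMM' : (M <= M')%MS by rewrite -addsmxE addsmxSl.
have CM' : forall i, C (c0 + row i M').
  move=> i; rewrite -(splitK i); case: (fintype.split i) => j /=.
    by rewrite rowKu.
  by rewrite rowKd row_id addrC subrK.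
have rM' : (\rank M' <= m)%N by apply: rank_max; apply/asboolP; exists (r + 1)%N, M'.
have eq_rank : \rank M' = \rank M.
  by apply/eqP; rewrite eqn_leq rM rM' -rM; exact: mxrankS.
have sM'M : (M' <= M)%MS.
  by move: (mxrank_leqif_sup sMM').2; rewrite eq_rank eqxx => <-.
by apply: submx_trans sM'M; rewrite -addsmxE addsmxSr.
Qed.

Lemma aff_closed {k} (C : set (V k)) : closure (aff C) `<=` aff C.
Proof.
have [[c0 Cc0] | C0] := pselect (C !=set0).
  by have [r [M [CM CMs]]] := frame_exists Cc0; exact: aff_frame_closed Cc0 CM CMs.
have affC0 : aff C `<=` set0.
  by apply: aff_min => [x y t [] | x Cx]; last by apply: C0; exists x.
by move=> x /(closureS affC0); rewrite closure0.
Qed.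

Lemma core_exists {k} {C : set (V k)} :
  is_convex C -> C !=set0 -> exists b, core C b.
Proof.
move=> cC [c0 Cc0]; have [r [M [CM CMs]]] := frame_exists Cc0.
by exists (c0 + const_mx r.+1%:R^-1 *m M); apply: frame_core.
Qed.

Lemma core_segment {k} {C : set (V k)} {b a : V k} {t : R} :
  is_convex C -> core C b -> closure C a -> 0 < t -> t <= 1 ->
  core C (t *: b + (1 - t) *: a).
Proof.
move=> cC [Cb [d d_gt0 bd]] aC t_gt0 t_le1; set z := t *: b + _.
have aA : aff C a by apply: aff_closed; apply: closureS aC; exact: sub_aff.
have td_gt0 : 0 < t * d / 2 by rewrite divr_gt0 // mulr_gt0.
suff zd : forall u, `|u - z| < t * d / 2 -> aff C u -> C u.
  split; last by exists (t * d / 2).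
  by apply: zd; [rewrite subrr normr0 | exact: aff_affine (sub_aff _ Cb) aA].
move=> u uz Au; have [c Cc ac] := closure_normP.1 aC _ td_gt0.
pose v := t^-1 *: (u - (1 - t) *: c).
have uE : u = t *: v + (1 - t) *: c.
  by rewrite /v scalerA mulfV ?gt_eqF // scale1r subrK.
suff Cv : C v by rewrite uE; exact: cC _ _ _ (ltW t_gt0) t_le1 Cv Cc.
apply: bd.
  have -> : v - b = t^-1 *: ((u - z) + (1 - t) *: (a - c)).
    by apply/rowP => j; rewrite !mxE; field; rewrite gt_eqF.
  rewrite normrZ ger0_norm ?invr_ge0 ?ltW // -(ltr_pM2l t_gt0) mulrA.
  rewrite mulfV ?gt_eqF // mul1r (splitr (t * d)).
  apply: le_lt_trans (ler_normD _ _) (ltr_leD uz _).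
  rewrite normrZ ger0_norm ?subr_ge0 //; apply: le_trans _ (ltW ac).
  by rewrite ler_piMl ?normr_ge0 // gerBl ltW.
have -> : v = t^-1 *: u + (1 - t^-1) *: c.
  by apply/rowP => j; rewrite !mxE; field; rewrite gt_eqF.
exact: aff_affine Au (sub_aff _ Cc).
Qed.

Lemma affine_extend {k} {A : set (V k)} {x0 x1 : V k} {r : R} :
  affine_set A -> A x0 -> A x1 -> 0 < r ->
  exists t x2, [/\ 0 < t, t <= 1, A x2, `|x2 - x0| < r &
                   x0 = t *: x1 + (1 - t) *: x2].
Proof.
move=> affA Ax0 Ax1 r_gt0.
have N_gt0 : 0 < `|x0 - x1| + 1 by rewrite ltr_pwDr.
pose e := r / (`|x0 - x1| + 1).
have e_gt0 : 0 < e by rewrite divr_gt0.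
have e1_gt0 : 0 < 1 + e by rewrite ltr_pwDr.
exists (e / (1 + e)), ((1 + e) *: x0 + (1 - (1 + e)) *: x1); split.
- by rewrite divr_gt0.
- by rewrite ler_pdivrMr // mul1r lerDr ltW.
- exact: affA.
- have -> : (1 + e) *: x0 + (1 - (1 + e)) *: x1 - x0 = e *: (x0 - x1).
    by apply/rowP => j; rewrite !mxE; ring.
  rewrite normrZ gtr0_norm // /e mulrAC ltr_pdivrMr //.
  by rewrite ltr_pM2l // ltrDl.
- by apply/rowP => j; rewrite !mxE; field; rewrite gt_eqF.
Qed.

Lemma ri_core {k} {C O : set (V k)} {a : V k} :
  is_convex C -> C `<=` O -> O `<=` closure C -> ri O a -> core C a.
Proof.
move=> cC CO OC [Oa [d d_gt0 aO]].
have [b bcore] : exists b, core C b.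
  apply: core_exists cC _.
  by have [c Cc _] := closure_normP.1 (OC _ Oa) 1 ltr01; exists c.
have aA : aff C a by apply: aff_closed; apply: closureS (OC _ Oa); exact: sub_aff.
have [t [x [t_gt0 t_le1 Ax xa ->]]] :=
  affine_extend (aff_affine C) aA (sub_aff _ bcore.1) (divr_gt0 d_gt0 (ltr0Sn _ k)).
apply: core_segment => //; apply: OC; apply: aO; split.
  exact: eball_of_norm.
exact: affS CO _ Ax.
Qed.

Lemma norm_lsubmx {k l} (z : V (k + l)) : `|lsubmx z| <= `|z|.
Proof. by apply: norm_le_coord => // i; rewrite mxE norm_coord_le. Qed.

Lemma gph_row {k l} {G : V k -> set (V l)} {x : V k} {y : V l} :
  gph G (row_mx x y) -> G x y.
Proof. by move=> [x' [y' [/eq_row_mx[-> ->] Gxy]]]. Qed.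

Lemma graph_core {k l} {C : set (V (k + l))} {G : V k -> set (V l)} {x0 : V k} :
  is_convex C -> C `<=` gph G -> gph G `<=` closure C -> ri (sv_dom G) x0 ->
  exists2 z0, core C z0 & lsubmx z0 = x0.
Proof.
move=> cC CG GC x0ri; pose P := lsubmx @` C.
have cP : is_convex P.
  move=> _ _ t t_ge0 t_le1 [z Cz <-] [z' Cz' <-].
  by exists (t *: z + (1 - t) *: z'); [exact: cC | rewrite linearD !linearZ].
have PG : P `<=` sv_dom G.
  by move=> _ [z /CG[x [y [-> Gxy]]] <-]; rewrite row_mxKl; exists y.
have GP : sv_dom G `<=` closure P.
  move=> x [y Gxy]; apply/closure_normP => e e_gt0.
  have xyC : closure C (row_mx x y) by apply: GC; exists x, y.
  have [c Cc xyc] := closure_normP.1 xyC e e_gt0.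
  exists (lsubmx c); first by exists c.
  have -> : x - lsubmx c = lsubmx (row_mx x y - c) by rewrite linearB /= row_mxKl.
  exact: le_lt_trans (norm_lsubmx _) xyc.
have [x0P [d d_gt0 x0d]] := ri_core cP PG GP x0ri.
have [b bcore] : exists b, core C b.
  apply: core_exists cC _; have [y Gx0y] := x0ri.1.
  have xyC : closure C (row_mx x0 y) by apply: GC; exists x0, y.
  by have [c Cc _] := closure_normP.1 xyC 1 ltr01; exists c.
have bP : aff P (lsubmx b) by apply: sub_aff; exists b => //; case: bcore.
have [t [x [t_gt0 t_le1 Px xx0 x0E]]] :=
  affine_extend (aff_affine P) (sub_aff _ x0P) bP d_gt0.
have [c Cc cx] : P x := x0d _ xx0 Px.
exists (t *: b + (1 - t) *: c); first exact: core_segment (subset_closure Cc) _ _.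
by rewrite linearD !linearZ /= cx x0E.
Qed.

Section PhiMap.
Context {n p q : nat}.

(* Given convex sets [C1 ⊆ Th ⊆ cl C1], [C2 ⊆ gph F ⊆ cl C2] and
   [C3 ⊆ gph G ⊆ cl C3], the points [(x, y, w)] with [x ∈ C1],
   [(x, y) ∈ C3] and [(x, w) ∈ C2] form a convex set sandwiched between
   [gph Phi] and its closure. *)
Definition phi_inner (C1 : set (V n)) (C2 : set (V (n + p)))
    (C3 : set (V (n + q))) : set (V (n + q + p)) :=
  [set z | [/\ C1 (lsubmx (lsubmx z)), C3 (lsubmx z) &
               C2 (row_mx (lsubmx (lsubmx z)) (rsubmx z))]].

Lemma phi_inner_convex {C1 C2 C3} :
  is_convex C1 -> is_convex C2 -> is_convex C3 ->
  is_convex (phi_inner C1 C2 C3).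
Proof.
move=> cC1 cC2 cC3 z z' t t_ge0 t_le1 [z1 z3 z2] [z1' z3' z2'].
rewrite /phi_inner /= !linearD !linearZ /=; split.
- exact: cC1.
- exact: cC3.
- by rewrite -add_row_mx -!scale_row_mx; exact: cC2.
Qed.

Lemma phi_inner_sub {Th F G C1 C2 C3} :
  C1 `<=` Th -> C2 `<=` gph F -> C3 `<=` gph G ->
  phi_inner C1 C2 C3 `<=` gph (Phi_map Th F G).
Proof.
move=> C1T C2F C3G z [z1 /C3G[x [y [xyE Gxy]]] /C2F/gph_row Fw].
exists (lsubmx z), (rsubmx z); split; first by rewrite hsubmxK.
rewrite xyE row_mxKl in z1 Fw.
by rewrite /Phi_map /= xyE row_mxKl row_mxKr; split; [exact: C1T | split].
Qed.

(* Moving from a point [(x0, y3, w2)] built from core points towards a point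
   of [gph Phi] stays inside [phi_inner], so [gph Phi] lies in its closure. *)
Lemma phi_inner_dense {Th F G C1 C2 C3} {x0 : V n} {z2 z3} :
  is_convex C1 -> is_convex C2 -> is_convex C3 ->
  Th `<=` closure C1 -> gph F `<=` closure C2 -> gph G `<=` closure C3 ->
  core C1 x0 -> core C2 z2 -> core C3 z3 -> lsubmx z2 = x0 -> lsubmx z3 = x0 ->
  gph (Phi_map Th F G) `<=` closure (phi_inner C1 C2 C3).
Proof.
move=> cC1 cC2 cC3 TC1 FC2 GC3 x0core z2core z3core z2x0 z3x0.
apply: (segments_closure (row_mx z3 (rsubmx z2))).
move=> _ t [xy [w [-> [Tx [Gxy Fxw]]]]] t_gt0 t_le1.
rewrite /phi_inner /= !linearD !linearZ /= !row_mxKl !row_mxKr z3x0; split.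
- exact: (core_segment cC1 x0core (TC1 _ Tx) t_gt0 t_le1).1.
- have xyG : gph G xy by exists (lsubmx xy), (rsubmx xy); rewrite hsubmxK.
  exact: (core_segment cC3 z3core (GC3 _ xyG) t_gt0 t_le1).1.
- have xwF : gph F (row_mx (lsubmx xy) w) by exists (lsubmx xy), w.
  rewrite -z2x0 -add_row_mx -!scale_row_mx hsubmxK.
  exact: (core_segment cC2 z2core (FC2 _ xwF) t_gt0 t_le1).1.
Qed.

End PhiMap.

End NearlyConvex.

Theorem theorem4p1 (R : realType) (n p q : nat) (Th : set 'rV[R]_n)
    (F : 'rV[R]_n -> set 'rV[R]_p) (G : 'rV[R]_n -> set 'rV[R]_q) :
  nearly_convex Th -> nearly_convex_map F -> nearly_convex_map G ->
  ri (sv_dom F) `&` ri (sv_dom G) `&` ri Th !=set0 ->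
  nearly_convex_map (Phi_map Th F G).
Proof.
move=> [C1 [/is_convexP cC1 [C1T TC1]]] [C2 [/is_convexP cC2 [C2F FC2]]].
move=> [C3 [/is_convexP cC3 [C3G GC3]]] [x0 [[riF riG] riT]].
have x0core := ri_core cC1 C1T TC1 riT.
have [z2 z2core z2x0] := graph_core cC2 C2F FC2 riF.
have [z3 z3core z3x0] := graph_core cC3 C3G GC3 riG.
exists (phi_inner C1 C2 C3); split; first exact/is_convexP/phi_inner_convex.
split; first exact: phi_inner_sub.
exact: phi_inner_dense x0core z2core z3core z2x0 z3x0.
Qed.
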